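(* Let $\mathbf x_1,\dots,\mathbf x_l\in\mathbb{R}^n$ and $y_1,\dots,y_l\in\{1,-1\}$; set $\bar{\mathbf x}_i=y_i\mathbf x_i$ and let $\overline{\mathbf X}\in\mathbb{R}^{l\times n}$ have $i$-th row $\bar{\mathbf x}_i^T$. For $C>0$ consider the SVM problem $$\min_{\mathbf w}\tfrac12\|\mathbf w\|^2+C\sum_{i=1}^l\big[1-\mathbf w^T(y_i\mathbf x_i)\big]_+$$ with optimal solution $\mathbf w^*(C)$, and its dual $\min_{\theta\in[0,1]^l}\frac C2\|\overline{\mathbf X}^T\theta\|^2-\sum_{i=1}^l\theta_i$ with optimal solution $\theta^*(C)$. Let $0<C_1<\dots<C_{\mathcal K}$ and suppose $\theta^*(C_k)$ is known for some integer $1\le k<\mathcal K$. If $$\tfrac{C_{k+1}+C_k}{2}\langle\overline{\mathbf X}^T\theta^*(C_k),\bar{\mathbf x}_i\rangle-\tfrac{C_{k+1}-C_k}{2}\|\overline{\mathbf X}^T\theta^*(C_k)\|\,\|\bar{\mathbf x}_i\|>1,$$ then $[\theta^*(C_{k+1})]_i=0$, i.e., $i\in\mathcal R$ (at $C=C_{k+1}$). Similarly, if $$\tfrac{C_{k+1}+C_k}{2}\langle\overline{\mathbf X}^T\theta^*(C_k),\bar{\mathbf x}_i\rangle+\tfrac{C_{k+1}-C_k}{2}\|\overline{\mathbf X}^T\theta^*(C_k)\|\,\|\bar{\mathbf x}_i\|<1,$$ then $[\theta^*(C_{k+1})]_i=1$, i.e., $i\in\mathcal L$.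
   Context: $[t]_+=\max\{t,0\}$. Primal and dual solutions satisfy $\mathbf w^*(C)=C\overline{\mathbf X}^T\theta^*(C)$. At parameter $C$: $\mathcal R=\{i:\langle\mathbf w^*(C),\bar{\mathbf x}_i\rangle>1\}$ and $\mathcal L=\{i:\langle\mathbf w^*(C),\bar{\mathbf x}_i\rangle<1\}$. *)

From HB Require Import structures.
From mathcomp Require Import all_boot all_order all_algebra.
Set Implicit Arguments. Unset Strict Implicit. Unset Printing Implicit Defensive.
Import Order.TTheory GRing.Theory Num.Theory.
Local Open Scope ring_scope.

Section SVM.
Variables (R : rcfType) (l n : nat).

Definition dotv (u v : 'rV[R]_n) : R := (u *m v^T) 0 0.
Definition normv (u : 'rV[R]_n) : R := Num.sqrt (dotv u u).

Definition xbar (x : 'I_l -> 'rV[R]_n) (y : 'I_l -> R) (i : 'I_l) : 'rV[R]_n :=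
  y i *: x i.

Definition Xbar (x : 'I_l -> 'rV[R]_n) (y : 'I_l -> R) : 'M[R]_(l, n) :=
  \matrix_(i < l) xbar x y i.

(* Xbar^T theta, written as the row vector theta *m Xbar (= (Xbar^T theta)^T) *)
Definition XbarT (x : 'I_l -> 'rV[R]_n) (y : 'I_l -> R) (theta : 'rV[R]_l)
  : 'rV[R]_n := theta *m Xbar x y.

Definition primal_obj x y (C : R) (w : 'rV[R]_n) : R :=
  2^-1 * normv w ^+ 2 + C * \sum_(i < l) Num.max 0 (1 - dotv w (y i *: x i)).

Definition primal_opt x y (C : R) (w : 'rV[R]_n) : Prop :=
  forall w', primal_obj x y C w <= primal_obj x y C w'.

Definition dual_obj x y (C : R) (theta : 'rV[R]_l) : R :=
  C / 2 * normv (XbarT x y theta) ^+ 2 - \sum_(i < l) theta 0 i.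

Definition in_box (theta : 'rV[R]_l) : Prop :=
  forall i, 0 <= theta 0 i <= 1.

Definition dual_opt x y (C : R) (theta : 'rV[R]_l) : Prop :=
  in_box theta /\ forall theta', in_box theta' -> dual_obj x y C theta <= dual_obj x y C theta'.

End SVM.

From HB Require Import structures.
From mathcomp Require Import all_boot all_order all_algebra.
From mathcomp Require Import ring lra.
Import Order.TTheory GRing.Theory Num.Theory.
Set Implicit Arguments. Unset Strict Implicit. Unset Printing Implicit Defensive.
Local Open Scope ring_scope.

(* The dual optima satisfy the variational inequality of the convex dual
   problem.  Adding the inequalities for th*(C_k) and th*(C_{k+1}) shows that
   w*(C_{k+1}) = C_{k+1} Xbar^T th*(C_{k+1}) lies in the ball with centre
   (C_{k+1} + C_k)/2 Xbar^T th*(C_k) and radius (C_{k+1} - C_k)/2 ||Xbar^T th*(C_k)||.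
   By Cauchy-Schwarz the screening hypotheses then force <w*, xbar_i> > 1
   (resp. < 1), and moving the single coordinate i inside the box shows that
   the optimal th_i sits at 0 (resp. 1). *)

Section RealQuadratics.
Variable R : realFieldType.

Lemma quadratic_ge0_discriminant (a b c : R) : 0 <= c ->
  (forall t, 0 <= a + 2 * b * t + c * t ^+ 2) -> b ^+ 2 <= a * c.
Proof.
move=> c_ge0 q; have [c0|c_neq0] := eqVneq c 0.
  have [->|b_neq0] := eqVneq b 0; first by rewrite expr0n c0 mulr0.
  have := q (- (a + 1) / (2 * b)).
  have -> : 2 * b * (- (a + 1) / (2 * b)) = - (a + 1) by field.
  rewrite c0 mul0r; lra.
have c_gt0 : 0 < c by rewrite lt_def c_neq0.
have := q (- b / c).
have -> : a + 2 * b * (- b / c) + c * (- b / c) ^+ 2 = (a * c - b ^+ 2) / c by field.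
rewrite pmulr_lge0 ?invr_gt0 //; lra.
Qed.

Lemma ge0_slope_of_quadratic (g p : R) : 0 <= p ->
  (forall t, 0 < t -> t <= 1 -> 0 <= t * g + t ^+ 2 * p) -> 0 <= g.
Proof.
move=> p_ge0 q; rewrite leNgt; apply/negP => g_lt0.
have d_gt0 : 0 < - g + p + 1 by lra.
have := q (- g / (- g + p + 1)).
rewrite divr_gt0 ?oppr_gt0 // ler_pdivrMr // mul1r.
have -> : - g / (- g + p + 1) * g + (- g / (- g + p + 1)) ^+ 2 * p
    = - g * (g * (1 - g)) / (- g + p + 1) ^+ 2.
  by field; rewrite gt_eqF.
have le_num_den : - g <= - g + p + 1 by lra.
rewrite pmulr_lge0 ?invr_gt0 ?exprn_gt0 // => /(_ isT le_num_den).
nra.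
Qed.

End RealQuadratics.

Section InnerProduct.
Variables (R : rcfType) (n : nat).
Implicit Types (u v w : 'rV[R]_n).

Lemma dotvC u v : dotv u v = dotv v u.
Proof. by rewrite /dotv !mxE; apply: eq_bigr => j _; rewrite !mxE mulrC. Qed.

Lemma dotvDl u v w : dotv (u + v) w = dotv u w + dotv v w.
Proof. by rewrite /dotv mulmxDl mxE. Qed.

Lemma dotvZl (a : R) u w : dotv (a *: u) w = a * dotv u w.
Proof. by rewrite /dotv -scalemxAl mxE. Qed.

Lemma dotvNl u w : dotv (- u) w = - dotv u w.
Proof. by rewrite -scaleN1r dotvZl mulN1r. Qed.

Lemma dotvBl u v w : dotv (u - v) w = dotv u w - dotv v w.
Proof. by rewrite dotvDl dotvNl. Qed.

Lemma dotvDr u v w : dotv w (u + v) = dotv w u + dotv w v.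
Proof. by rewrite dotvC dotvDl !(dotvC w). Qed.

Lemma dotvZr (a : R) u w : dotv w (a *: u) = a * dotv w u.
Proof. by rewrite dotvC dotvZl dotvC. Qed.

Lemma dotvBr u v w : dotv w (u - v) = dotv w u - dotv w v.
Proof. by rewrite dotvC dotvBl !(dotvC w). Qed.

Lemma dotv_ge0 u : 0 <= dotv u u.
Proof.
rewrite /dotv mxE; apply: sumr_ge0 => j _.
by rewrite mxE -expr2 sqr_ge0.
Qed.

Lemma normv_ge0 u : 0 <= normv u.
Proof. exact: sqrtr_ge0. Qed.

Lemma dotv_sqr_le u v : dotv u v ^+ 2 <= dotv u u * dotv v v.
Proof.
apply: quadratic_ge0_discriminant (dotv_ge0 v) _ => t.
have := dotv_ge0 (u + t *: v).
rewrite !(dotvDl, dotvDr, dotvZl, dotvZr) (dotvC v u).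
by congr (_ <= _); ring.
Qed.

Lemma cauchy_schwarz u v : `|dotv u v| <= normv u * normv v.
Proof. by rewrite /normv -sqrtrM ?dotv_ge0 // -sqrtr_sqr ler_wsqrtr ?dotv_sqr_le. Qed.

Lemma normv_le_scale u v (a : R) : 0 <= a ->
  dotv u u <= a ^+ 2 * dotv v v -> normv u <= a * normv v.
Proof.
move=> a_ge0 le_uv.
by rewrite /normv -[a]ger0_norm // -sqrtr_sqr -sqrtrM ?sqr_ge0 // ler_wsqrtr.
Qed.

Lemma dotv_ball w c v (rho : R) : normv (w - c) <= rho ->
  dotv c v - rho * normv v <= dotv w v <= dotv c v + rho * normv v.
Proof.
move=> w_near_c.
have := le_trans (cauchy_schwarz (w - c) v) (ler_wpM2r (normv_ge0 v) w_near_c).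
rewrite dotvBl ler_norml => /andP[lo hi]; apply/andP; split; lra.
Qed.

Lemma ball_of_monotone (c c' : R) u u' :
  0 < c' -> c <= c' ->
  0 <= c * dotv u (u' - u) + c' * dotv u' (u - u') ->
  normv (c' *: u' - (c' + c) / 2 *: u) <= (c' - c) / 2 * normv u.
Proof.
move=> c'_gt0 le_cc' mono; apply: normv_le_scale; first lra.
move: mono; rewrite !(dotvBl, dotvBr, dotvZl, dotvZr) (dotvC u' u).
move: (dotv u u) (dotv u u') (dotv u' u') => uu uu' u'u' mono.
(* With m = (c' + c) / 2 and r = (c' - c) / 2 we have m ^ 2 - r ^ 2 = c c'. *)
rewrite -subr_ge0; set gap := (X in 0 <= X).
have -> : gap = c' * (c * (uu' - uu) + c' * (uu' - u'u')) by rewrite /gap; field.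
by rewrite mulr_ge0 // ltW.
Qed.

End InnerProduct.

Section DualOptimality.
Variables (R : rcfType) (l n : nat) (x : 'I_l -> 'rV[R]_n) (y : 'I_l -> R).
Implicit Types (C : R) (th : 'rV[R]_l).

Local Notation u := (XbarT x y).

Lemma XbarTD th th' : u (th + th') = u th + u th'.
Proof. exact: mulmxDl. Qed.

Lemma XbarTB th th' : u (th - th') = u th - u th'.
Proof. exact: mulmxBl. Qed.

Lemma XbarTZ (a : R) th : u (a *: th) = a *: u th.
Proof. by rewrite /XbarT scalemxAl. Qed.

Lemma XbarT_delta i : u (delta_mx 0 i) = xbar x y i.
Proof. by rewrite /XbarT -rowE rowK. Qed.

Lemma sum_coordD th th' : \sum_j (th + th') 0 j = \sum_j th 0 j + \sum_j th' 0 j.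
Proof. by rewrite -big_split; apply: eq_bigr => j _; rewrite mxE. Qed.

Lemma sum_coordZ (a : R) th : \sum_j (a *: th) 0 j = a * \sum_j th 0 j.
Proof. by rewrite mulr_sumr; apply: eq_bigr => j _; rewrite mxE. Qed.

Lemma sum_coordB th th' : \sum_j (th - th') 0 j = \sum_j th 0 j - \sum_j th' 0 j.
Proof. by rewrite sum_coordD -scaleN1r sum_coordZ mulN1r. Qed.

Lemma sum_coord_delta i : \sum_j (delta_mx 0 i : 'rV[R]_l) 0 j = 1.
Proof.
rewrite (bigD1 i) //= mxE !eqxx big1 ?addr0 // => j /negbTE ji.
by rewrite mxE ji andbF.
Qed.

Lemma in_box_lerp th th' t : in_box th -> in_box th' -> 0 <= t -> t <= 1 ->
  in_box (th + t *: (th' - th)).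
Proof.
move=> box box' t_ge0 t_le1 j; rewrite !mxE.
by move: (box j) (box' j) => /andP[? ?] /andP[? ?]; apply/andP; split; nra.
Qed.

(* First-order optimality along the segment from [th] to [th'], which stays in the box. *)
Lemma dual_opt_vi C th th' : 0 <= C -> dual_opt x y C th -> in_box th' ->
  0 <= C * dotv (u th) (u th' - u th) - (\sum_j th' 0 j - \sum_j th 0 j).
Proof.
move=> C_ge0 [box opt] box'.
apply: (@ge0_slope_of_quadratic _ _ (C / 2 * dotv (u th' - u th) (u th' - u th))).
  by rewrite mulr_ge0 ?dotv_ge0 ?divr_ge0.
move=> t t_gt0 t_le1.
have := opt _ (in_box_lerp box box' (ltW t_gt0) t_le1).
rewrite /dual_obj /normv !sqr_sqrtr ?dotv_ge0 //.
rewrite XbarTD XbarTZ XbarTB sum_coordD sum_coordZ sum_coordB.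
move: (u th) (u th' - u th) (\sum_j th 0 j) (\sum_j th' 0 j) => a d S S'.
rewrite !(dotvDl, dotvDr, dotvZl, dotvZr) (dotvC d a).
move: (dotv a a) (dotv a d) (dotv d d) => aa ad dd.
lra.
Qed.

Lemma dual_opt_monotone C C' th th' : 0 <= C -> 0 <= C' ->
  dual_opt x y C th -> dual_opt x y C' th' ->
  0 <= C * dotv (u th) (u th' - u th) + C' * dotv (u th') (u th - u th').
Proof.
move=> C_ge0 C'_ge0 opt opt'.
have := dual_opt_vi C_ge0 opt opt'.1; have := dual_opt_vi C'_ge0 opt' opt.1.
lra.
Qed.

Lemma dual_opt_ball C C' th th' : 0 < C -> C <= C' ->
  dual_opt x y C th -> dual_opt x y C' th' ->
  normv (C' *: u th' - (C' + C) / 2 *: u th) <= (C' - C) / 2 * normv (u th).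
Proof.
move=> C_gt0 le_CC' opt opt'; apply: ball_of_monotone => //; first exact: lt_le_trans le_CC'.
by apply: dual_opt_monotone opt opt'; rewrite ltW // (lt_le_trans C_gt0).
Qed.

Lemma dual_opt_coord C th i c : 0 <= C -> dual_opt x y C th ->
  0 <= th 0 i + c <= 1 -> 0 <= c * (dotv (C *: u th) (xbar x y i) - 1).
Proof.
move=> C_ge0 opt box_i.
have box : in_box (th + c *: delta_mx 0 i).
  move=> j; rewrite !mxE; have [->|_] := eqVneq j i; first by rewrite mulr1.
  by rewrite mulr0 addr0; apply: opt.1.
have := dual_opt_vi C_ge0 opt box.
rewrite XbarTD XbarTZ XbarT_delta sum_coordD sum_coordZ sum_coord_delta.
rewrite mulr1 [u th + _]addrC [_ + c]addrC !addrK dotvZr dotvZl; lra.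
Qed.

Lemma dual_opt_coord_eq0 C th i : 0 <= C -> dual_opt x y C th ->
  1 < dotv (C *: u th) (xbar x y i) -> th 0 i = 0.
Proof.
move=> C_ge0 opt gt1; have /andP[th_ge0 th_le1] := opt.1 i.
have := dual_opt_coord (i := i) (c := - th 0 i) C_ge0 opt.
rewrite addrN lexx ler01 => /(_ isT).
nra.
Qed.

Lemma dual_opt_coord_eq1 C th i : 0 <= C -> dual_opt x y C th ->
  dotv (C *: u th) (xbar x y i) < 1 -> th 0 i = 1.
Proof.
move=> C_ge0 opt lt1; have /andP[th_ge0 th_le1] := opt.1 i.
have := dual_opt_coord (i := i) (c := 1 - th 0 i) C_ge0 opt.
rewrite addrC subrK lexx ler01 => /(_ isT).
nra.
Qed.

End DualOptimality.

Lemma gt0_increasing_from1 (R : realDomainType) (C : nat -> R) (K : nat) :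
  0 < C 1%N -> (forall j, (1 <= j)%N -> (j < K)%N -> C j < C j.+1) ->
  forall j, (1 <= j)%N -> (j <= K)%N -> 0 < C j.
Proof.
move=> C1_gt0 C_incr; elim=> [//|j IH _ jK].
case: j IH jK => [//|j] IH jK.
exact: lt_trans (IH isT (ltnW jK)) (C_incr j.+1 isT jK).
Qed.

Theorem corollary3 (R : rcfType) (l n : nat)
  (x : 'I_l -> 'rV[R]_n) (y : 'I_l -> R)
  (hy : forall i, y i = 1 \/ y i = -1)
  (K : nat) (C : nat -> R)
  (hCpos : 0 < C 1%N)
  (hCinc : forall j, (1 <= j)%N -> (j < K)%N -> C j < C j.+1)
  (k : nat) (hk1 : (1 <= k)%N) (hkK : (k < K)%N)
  (thk thk1 : 'rV[R]_l) (w1 : 'rV[R]_n)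
  (hthk : dual_opt x y (C k) thk)
  (hthk1 : dual_opt x y (C k.+1) thk1)
  (hw1 : primal_opt x y (C k.+1) w1)
  (hw1th : w1 = C k.+1 *: XbarT x y thk1)
  (i : 'I_l) :
  ((C k.+1 + C k) / 2 * dotv (XbarT x y thk) (xbar x y i)
     - (C k.+1 - C k) / 2 * normv (XbarT x y thk) * normv (xbar x y i) > 1 ->
   thk1 0 i = 0 /\ dotv w1 (xbar x y i) > 1)
  /\
  ((C k.+1 + C k) / 2 * dotv (XbarT x y thk) (xbar x y i)
     + (C k.+1 - C k) / 2 * normv (XbarT x y thk) * normv (xbar x y i) < 1 ->
   thk1 0 i = 1 /\ dotv w1 (xbar x y i) < 1).
Proof.
(* [hw1th] already ties the primal solution to the dual one. *)
have Ck_gt0 : 0 < C k := gt0_increasing_from1 hCpos hCinc hk1 (ltnW hkK).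
have Ck_lt : C k < C k.+1 := hCinc _ hk1 hkK.
have Ck1_ge0 : 0 <= C k.+1 by rewrite ltW // (lt_trans Ck_gt0).
have ball := dual_opt_ball Ck_gt0 (ltW Ck_lt) hthk hthk1.
rewrite -hw1th in ball.
have /andP[lo hi] := dotv_ball (xbar x y i) ball.
rewrite !dotvZl in lo hi.
split=> bound.
  have gt1 : 1 < dotv w1 (xbar x y i) by lra.
  by split=> //; apply: dual_opt_coord_eq0 Ck1_ge0 hthk1 _; rewrite -hw1th.
have lt1 : dotv w1 (xbar x y i) < 1 by lra.
by split=> //; apply: dual_opt_coord_eq1 Ck1_ge0 hthk1 _; rewrite -hw1th.
Qed.
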